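(* Consider binary classification on $\mathcal{X}=\{x\in\mathbb{R}^2:\|x\|\le1\}$ with $x$ uniformly distributed on $\mathcal{X}$, linear hypotheses $h_w(x)=\mathrm{sgn}(x^{\top}w)$, $w\in\mathbb{R}^2$, identified with their parameters and with metric $d_{\mathcal{H}}(h_w,h_{w'})=\|w-w'\|_2$, and let $g=h_{(1,0)}$. Assume the sample $x_0$ forms an angle $\theta_0\in(0,\pi/2)$ with the $x$-axis, and consider $\varepsilon\in(0,1)$ with $\theta_0+\pi\varepsilon<\pi/2$. Let $\mathcal{H}_N$ consist of the hypotheses with $N$ i.i.d. random parameters drawn from $\mathcal{N}((1,0),\sigma^2 I_2)$ for some fixed $\sigma^2>0$, and let $B>0$ be a fixed constant. Then there exist $\alpha(N,\varepsilon)=\mathcal{O}(1/\sqrt{N})$ and $\beta(N)=\mathcal{O}(e^{-\sqrt{N}})$ such that $$\mathbb{P}\Big[\inf_{\substack{h^*\in\mathcal{H}^{g,x_0}\\ \rho(h^*,g)-L(g,x_0)\le\varepsilon}}\ \min_{h\in\mathcal{H}_N^{g,x_0}} d_{\mathcal{H}}(h^*,h)\le\tfrac1B\alpha(N,\varepsilon)\Big]\ge1-\beta(N).$$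
   Context: $\rho(h_1,h_2)=\mathbb{P}_X[h_1(X)\neq h_2(X)]$ with $X$ uniform on $\mathcal{X}$; $\mathcal{H}^{g,x_0}=\{h: h(x_0)\neq g(x_0)\}$ over all linear hypotheses; $\mathcal{H}_N^{g,x_0}=\mathcal{H}_N\cap\mathcal{H}^{g,x_0}$; $L(g,x_0)=\inf_{h\in\mathcal{H}^{g,x_0}}\rho(h,g)$. The probability is over the random draw of $\mathcal{H}_N$. *)

From HB Require Import structures.
From mathcomp Require Import all_boot all_order all_algebra.
From mathcomp Require Import all_classical all_reals all_analysis.
Set Implicit Arguments. Unset Strict Implicit. Unset Printing Implicit Defensive.
Import Order.TTheory GRing.Theory Num.Theory.
Local Open Scope classical_set_scope.
Local Open Scope ring_scope.

Section defs.
Context {R : realType}.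

Definition dot2 (x w : R * R) : R := x.1 * w.1 + x.2 * w.2.
Definition norm2 (w : R * R) : R := Num.sqrt (w.1 ^+ 2 + w.2 ^+ 2).

Definition disk : set (R * R) := [set x | norm2 x <= 1].

Definition hyp (w : R * R) : R * R -> R := fun x => Num.sg (dot2 x w).

Definition g_target : R * R -> R := hyp (1, 0).

Definition leb2 : set (R * R) -> \bar R :=
  (@lebesgue_measure R \x @lebesgue_measure R)%E.

(* rho(h1,h2) = P_X[h1 X <> h2 X], X uniform on the unit disk *)
Definition rho (h1 h2 : R * R -> R) : R :=
  fine (leb2 (disk `&` [set x | h1 x != h2 x])) / fine (leb2 disk).

Definition Hgx0 (x0 : R * R) : set (R * R) :=
  [set w | hyp w x0 != g_target x0].

Definition Lgx0 (x0 : R * R) : \bar R :=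
  ereal_inf [set (rho (hyp w) g_target)%:E | w in Hgx0 x0].

Definition gauss2 (m : R * R) (s : R) : set (R * R) -> \bar R :=
  (normal_prob m.1 s \x normal_prob m.2 s)%E.

Definition iid_law d (T : measurableType d) (P : probability T R) (N : nat)
  (W : 'I_N -> T -> R * R) (mu : set (R * R) -> \bar R) : Prop :=
  (forall i, measurable_fun setT (W i)) /\
  (forall i (A : set (R * R)), measurable A -> P (W i @^-1` A) = mu A) /\
  (forall A : 'I_N -> set (R * R), (forall i, measurable (A i)) ->
     P (\bigcap_(i in [set: 'I_N]) (W i @^-1` A i)) =
     (\prod_(i < N) P (W i @^-1` A i))%E).

(* min_{h in H_N^{g,x0}} d_H(h*, h) for sample H_N = {h_{w_i}} (+oo if empty) *)
Definition min_dist (x0 : R * R) N (ws : 'I_N -> R * R) (wstar : R * R) : \bar R :=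
  (\big[mine/+oo]_(i < N | ws i \in Hgx0 x0) (norm2 (wstar - ws i))%:E)%E.

Definition inf_min_dist (x0 : R * R) (eps : R) N (ws : 'I_N -> R * R) : \bar R :=
  ereal_inf [set min_dist x0 ws wstar | wstar in
     [set w | w \in Hgx0 x0 /\ ((rho (hyp w) g_target)%:E - Lgx0 x0 <= eps%:E)%E]].

End defs.

From HB Require Import structures.
From mathcomp Require Import all_boot all_order all_algebra.
From mathcomp Require Import all_classical all_reals all_analysis.
From mathcomp Require Import measurable_realfun ring lra.
Import Order.TTheory GRing.Theory Num.Theory.
Local Open Scope classical_set_scope.
Local Open Scope ring_scope.

(* Write [x0 = (a, b)] with [a > 0 <= b] and [k = b / a].  A parameter [w] is
   in [H^{g,x0}] iff [w.1 + k w.2 <= 0], and among these [u = (k, -1)] has the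
   least disagreement area with [g]: comparing the vertical fibres of the
   disagreement regions and integrating (Fubini) gives [rho(h_u, g) <= L(g, x0)].
   On the box [k - eta, k] x [-1 - eta, -1] every fibre grows by at most an
   interval of length [2 (k + 1) eta], so, the disk having area at least 1,
   the whole box is eps-near-optimal once [4 (k + 1) eta <= eps].  The Gaussian
   gives the box a mass [p > 0], so with probability [1 - (1 - p)^N] some sample
   parameter lies in it; that sample is itself an admissible [h*], at distance
   0.  Hence [alpha = 0] and [beta N = (1 - p)^N], which is [O(exp (- sqrt N))]. *)

Lemma sgr_nondecreasing (R : realDomainType) : {homo @Num.sg R : a b / a <= b}.
Proof. by move=> a b ab; case: sgrP => ha; case: sgrP => hb //; lra. Qed.

Lemma sgr_neqE (R : realDomainType) (a t : R) :
  t != 0 -> (Num.sg a != Num.sg t) = (t * a <= 0).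
Proof.
case: (ltgtP t 0) => // ht _.
  by rewrite (ltr0_sg ht) nmulr_rle0 // sgr_cp0 leNgt.
by rewrite (gtr0_sg ht) pmulr_rle0 // sgr_cp0 leNgt.
Qed.

Lemma fine_leD {R : numDomainType} {x y : \bar R} {c : R} :
  x \is a fin_num -> y \is a fin_num ->
  (x <= y + c%:E)%E -> fine x <= fine y + c.
Proof. by case: x y => [x| |] [y| |] //= _ _; rewrite -EFinD lee_fin. Qed.

Lemma ler_div_ge1D {R : realFieldType} (a b c A : R) :
  1 <= A -> 0 <= c -> a <= b + c -> a / A <= b / A + c.
Proof.
move=> A1 c0 abc; have A0 : 0 < A by lra.
rewrite ler_pdivrMr // mulrDl divfK ?gt_eqF //.
have : c <= c * A by rewrite ler_peMr.
lra.
Qed.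

Section disagreement.
Context {R : realType}.
Implicit Types (v w : R * R) (k t y D : R).
Local Notation mu := (@lebesgue_measure R).

Definition disagree v : set (R * R) := disk `&` [set x | hyp v x != g_target x].

(* For [k = slope x0] the decision line of [hyp (opt_param k)] passes through [x0]. *)
Definition opt_param k : R * R := (k, -1).

Lemma norm2_le1E (x : R * R) : (norm2 x <= 1) = (x.1 ^+ 2 + x.2 ^+ 2 <= 1).
Proof. by rewrite /norm2 -{1}sqrtr1 ler_sqrt. Qed.

Lemma measurable_disk : measurable (disk : set (R * R)).
Proof.
have mf : measurable_fun [set: R * R] (fun x => x.1 ^+ 2 + x.2 ^+ 2 <= 1).
  apply: measurable_fun_ler => //.
  by apply: measurable_funD; apply: measurable_funX; [exact: measurable_fst|exact: measurable_snd].
rewrite (_ : disk = (fun x => x.1 ^+ 2 + x.2 ^+ 2 <= 1) @^-1` [set true]).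
  by rewrite -[X in measurable X]setTI; exact: mf.
by apply/seteqP; split => x; rewrite /disk /= norm2_le1E.
Qed.

Lemma measurable_hyp v : measurable_fun [set: R * R] (hyp v).
Proof.
apply: measurableT_comp; first exact: nondecreasing_measurable (@sgr_nondecreasing R).
rewrite /dot2; apply: measurable_funD; apply: measurable_funM => //;
  by [exact: measurable_fst|exact: measurable_snd].
Qed.

Lemma measurable_disagree v : measurable (disagree v).
Proof.
apply: measurableI; first exact: measurable_disk.
rewrite -[X in measurable X]setTI.
have := measurable_neg (measurable_fun_eqr (measurable_hyp v) (measurable_hyp (1, 0))).
by apply.
Qed.

Lemma xsection_disagreeE v t : t != 0 ->
  xsection (disagree v) t = [set y | t ^+ 2 + y ^+ 2 <= 1 /\ t * (t * v.1 + y * v.2) <= 0].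
Proof.
move=> t0; apply/seteqP; split => y;
  rewrite /xsection /= inE /disagree /disk /g_target /hyp /dot2 /= norm2_le1E;
  by rewrite mulr1 mulr0 addr0 sgr_neqE.
Qed.

Lemma measurable_xsection_disagree v t : measurable (xsection (disagree v) t).
Proof. exact: measurable_xsection t (measurable_disagree v). Qed.

Lemma lebesgue_xsection_opt_le k v t : 0 <= k -> v.1 + k * v.2 <= 0 -> t != 0 ->
  (mu (xsection (disagree (opt_param k)) t) <= mu (xsection (disagree v) t))%E.
Proof.
move=> k0 hv t0.
have [v2lt0|v2ge0] := ltP v.2 0.
  apply: le_measure; rewrite ?inE; try exact: measurable_xsection_disagree.
  rewrite !xsection_disagreeE // => y /= [y1 hy]; split => //.
  have -> : t * (t * v.1 + y * v.2) =
            t ^+ 2 * (v.1 + k * v.2) + (- v.2) * (t * (t * k + y * -1)) by ring.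
  have := mulr_ge0_le0 (sqr_ge0 t) hv.
  have : 0 <= - v.2 by rewrite oppr_ge0 ltW.
  by move/mulr_ge0_le0/(_ hy); lra.
(* The optimal fibre lies in the half-chord [t * y >= 0]; the fibre of [v]
   contains the opposite half-chord, which has the same Lebesgue measure. *)
rewrite -(lebesgue_measureN (measurable_xsection_disagree v t)).
apply: le_measure; rewrite ?inE; try exact: measurable_xsection_disagree.
  rewrite -[X in measurable X]setTI.
  by apply: oppr_measurable; last exact: measurable_xsection_disagree.
rewrite /= !xsection_disagreeE //.
suff sub (y : R) : t ^+ 2 + y ^+ 2 <= 1 /\ t * (t * k + y * -1) <= 0 ->
    t ^+ 2 + (- y) ^+ 2 <= 1 /\ t * (t * v.1 + - y * v.2) <= 0 by move=> y; exact: sub.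
move=> [y1 hy]; split; first by rewrite sqrrN.
have ty : 0 <= t * y by nra.
have v1 : v.1 <= 0 by nra.
have -> : t * (t * v.1 + - y * v.2) = t ^+ 2 * v.1 - (t * y) * v.2 by ring.
have := mulr_ge0_le0 (sqr_ge0 t) v1; have := mulr_ge0 ty v2ge0; lra.
Qed.

Lemma xsection_near_sub k D w t : w.2 <= -1 -> - (k * w.2) - w.1 <= D ->
  t != 0 -> t ^+ 2 <= 1 ->
  xsection (disagree w) t `<=`
  xsection (disagree (opt_param k)) t `|` `[t * k - D, t * k + D].
Proof.
move=> w2 hD t0 t1; rewrite !xsection_disagreeE //.
suff sub (y : R) : t ^+ 2 + y ^+ 2 <= 1 /\ t * (t * w.1 + y * w.2) <= 0 ->
    (t ^+ 2 + y ^+ 2 <= 1 /\ t * (t * k + y * -1) <= 0) \/ (t * k - D <= y <= t * k + D).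
  by move=> y /sub [] ?; [left|right; rewrite /= in_itv].
move=> [y1 hy]; have [?|tz_gt0] := leP (t * (t * k + y * -1)) 0; [by left|right].
(* off the optimal fibre, [0 < t * (t * k - y) <= t ^+ 2 * D], so [|y - t * k| <= |t| D <= D] *)
have tz_le : t * (t * k - y) <= t ^+ 2 * D.
  have : 0 <= t ^+ 2 * (D - (- (k * w.2) - w.1)) by rewrite mulr_ge0 ?sqr_ge0 ?subr_ge0.
  have : 0 <= t * (t * k - y) * (- w.2 - 1) by rewrite mulr_ge0 //; lra.
  lra.
have D_ge0 : 0 <= D by have := sqr_ge0 t; nra.
have [t_gt0|t_le0] := ltP 0 t.
  have : 0 < t * k - y by rewrite -(pmulr_rgt0 _ t_gt0); lra.
  have : t * k - y <= t * D by rewrite -(ler_pM2l t_gt0); lra.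
  have : t * D <= D by nra.
  by move=> *; apply/andP; split; lra.
have t_lt0 : t < 0 by rewrite lt_neqAle t0 t_le0.
have : t * k - y < 0 by rewrite -(nmulr_rgt0 _ t_lt0); lra.
have : t * D <= t * k - y by rewrite -(ler_nM2l t_lt0); lra.
have : - D <= t * D by nra.
by move=> *; apply/andP; split; lra.
Qed.

Lemma lebesgue_xsection_near_le k D w t : 0 <= D -> w.2 <= -1 ->
  - (k * w.2) - w.1 <= D -> t != 0 ->
  (mu (xsection (disagree w) t) <=
   mu (xsection (disagree (opt_param k)) t) + ((D *+ 2) * \1_`[-1, 1] t)%:E)%E.
Proof.
move=> D0 w2 hD t0.
have [t1|t1] := leP (t ^+ 2) 1; last first.
  rewrite [X in mu X]xsection_disagreeE // (_ : [set y | _] = set0); last first.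
    by apply/seteqP; split => // y /= [y1 _]; have := sqr_ge0 y; lra.
  by rewrite measure0 adde_ge0 ?measure_ge0 // lee_fin mulr_ge0 ?mulrn_wge0.
have -> : \1_`[-1, 1] t = 1 :> R.
  by rewrite indicE mem_set //= in_itv /=; apply/andP; split; nra.
rewrite mulr1; set I := `[t * k - D, t * k + D]%classic.
have mI : measurable I by exact: measurable_itv.
apply: (@le_trans _ _ (mu (xsection (disagree (opt_param k)) t `|` I))).
  apply: le_measure; rewrite ?inE; last exact: xsection_near_sub.
    exact: measurable_xsection_disagree.
  exact: measurableU (measurable_xsection_disagree _ _) mI.
apply: le_trans; first by apply: measureU2 => //; exact: measurable_xsection_disagree.
apply: leeD => //; change (mu I <= (D *+ 2)%:E)%E.
rewrite /I lebesgue_measure_itv /= lte_fin.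
by case: ifP => _; rewrite -?EFinB lee_fin; lra.
Qed.

Lemma ae_lebesgue_neq0 (P : R -> Prop) :
  (forall t, t != 0 -> P t) -> {ae mu, forall t, P t}.
Proof.
move=> HP; exists [set 0]; split; [exact: measurable_set1|exact: lebesgue_measure_set1|].
by move=> t /= nPt; apply/eqP/negPn/negP => t0; exact: nPt (HP t t0).
Qed.

Lemma leb2_disagree_opt_le k v : 0 <= k -> v.1 + k * v.2 <= 0 ->
  (leb2 (disagree (opt_param k)) <= leb2 (disagree v))%E.
Proof.
move=> k0 hv; rewrite /leb2 /product_measure1 /=.
apply: ae_ge0_le_integral => //; last first.
  by apply: ae_lebesgue_neq0 => t t0 _; exact: lebesgue_xsection_opt_le.
all: by apply: measurable_fun_xsection; exact: measurable_disagree.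
Qed.

Lemma leb2_disagree_near_le k D w : 0 <= D -> w.2 <= -1 -> - (k * w.2) - w.1 <= D ->
  (leb2 (disagree w) <= leb2 (disagree (opt_param k)) + (D *+ 4)%:E)%E.
Proof.
move=> D0 w2 hD; rewrite /leb2 /product_measure1 /=.
pose band t := ((D *+ 2) * \1_(`[-1, 1] : set R) t)%:E.
have band_ge0 t : (0 <= band t)%E by rewrite lee_fin mulr_ge0 ?mulrn_wge0.
have mband : measurable_fun [set: R] band.
  apply/measurable_EFinP; apply: measurable_funM => //; exact: measurable_indic.
have mopt : measurable_fun [set: R] (fun t => mu (xsection (disagree (opt_param k)) t)).
  by apply: measurable_fun_xsection; exact: measurable_disagree.
apply: (@le_trans _ _ (\int[mu]_t (mu (xsection (disagree (opt_param k)) t) + band t))%E).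
  apply: ae_ge0_le_integral => //.
  - by apply: measurable_fun_xsection; exact: measurable_disagree.
  - by move=> t _; rewrite adde_ge0.
  - exact: emeasurable_funD.
  by apply: ae_lebesgue_neq0 => t t0 _; exact: lebesgue_xsection_near_le.
rewrite ge0_integralD //; apply: leeD => //.
rewrite /band; under eq_integral do rewrite EFinM.
rewrite ge0_integralZl_EFin ?mulrn_wge0 //.
  rewrite integral_indic // setIT.
  change ((D *+ 2)%:E * mu (`[(-1)%R, 1%R]%classic : set R) <= (D *+ 4)%:E)%E.
  rewrite lebesgue_measure_itv /= lte_fin ifT; last lra.
  by rewrite -EFinB -EFinM lee_fin opprK -mulr_natr -mulr_natr -mulrA; lra.
by apply/measurable_EFinP; exact: (@measurable_indic _ R R _ (`[-1, 1]%classic : set R)).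
Qed.

End disagreement.

Section disk_area.
Context {R : realType}.
Local Notation square a := ((`[- a, a]%classic : set R) `*` (`[- a, a]%classic : set R)).

Lemma leb2_square (a : R) : 0 <= a -> leb2 (square a) = ((a *+ 2) ^+ 2)%:E.
Proof.
move=> a0; rewrite /leb2 product_measure1E; try exact: measurable_itv.
have len : lebesgue_measure (`[- a, a]%classic : set R) = (a *+ 2)%:E.
  rewrite lebesgue_measure_itv /= lte_fin.
  have [aNa|aNa] := ltP (- a) a; first by rewrite -EFinB opprK -mulr2n.
  have -> : a = 0 by apply: le_anti; apply/andP; split; lra.
  by rewrite mul0rn.
by rewrite [X in (X * _)%E]len [X in (_ * X)%E]len -EFinM expr2.
Qed.

Lemma disk_sub_square : disk `<=` square (1 : R).
Proof.
move=> [x y]; rewrite /disk /= norm2_le1E /= !in_itv /= => h.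
by have := sqr_ge0 x; have := sqr_ge0 y; move=> *; repeat (apply/andP; split); nra.
Qed.

Lemma square_sub_disk : square (2^-1 : R) `<=` disk.
Proof.
by move=> [x y]; rewrite /disk /= norm2_le1E /= !in_itv /= => -[/andP[? ?] /andP[? ?]]; nra.
Qed.

Lemma leb2_disk_ge1 : (1 <= leb2 (disk : set (R * R)))%E.
Proof.
have -> : 1%E = leb2 (square (2^-1 : R)).
  rewrite leb2_square ?invr_ge0 // (_ : 2^-1 *+ 2 = 1 :> R) ?expr1n //.
  by rewrite mulr2n; lra.
apply: le_measure; rewrite ?inE; last exact: square_sub_disk.
  by apply: measurableX; exact: measurable_itv.
exact: measurable_disk.
Qed.

Lemma fin_num_leb2_sub_disk (A : set (R * R)) :
  measurable A -> A `<=` disk -> leb2 A \is a fin_num.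
Proof.
move=> mA Ad; rewrite ge0_fin_numE ?measure_ge0 //.
apply: (@le_lt_trans _ _ (leb2 (square (1 : R)))); last by rewrite leb2_square ?ltry.
apply: le_measure; rewrite ?inE //; first by apply: measurableX; exact: measurable_itv.
exact: subset_trans Ad disk_sub_square.
Qed.

End disk_area.

Section near_optimal.
Context {R : realType}.
Implicit Types (v w : R * R) (k D eps eta : R).

Lemma fin_num_leb2_disagree v : leb2 (disagree v) \is a fin_num.
Proof. exact: fin_num_leb2_sub_disk (measurable_disagree v) (@subIsetl _ _ _). Qed.

Lemma leb2_disk_fine_ge1 : 1 <= fine (leb2 (disk : set (R * R))).
Proof.
by rewrite -lee_fin fineK ?fin_num_leb2_sub_disk //; [exact: leb2_disk_ge1|exact: measurable_disk].
Qed.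

Lemma rho_opt_le k v : 0 <= k -> v.1 + k * v.2 <= 0 ->
  rho (hyp (opt_param k)) g_target <= rho (hyp v) g_target.
Proof.
move=> k0 hv; apply: ler_wpM2r; first by rewrite invr_ge0 (le_trans ler01 leb2_disk_fine_ge1).
apply: fine_le; try exact: fin_num_leb2_disagree.
exact: leb2_disagree_opt_le.
Qed.

Lemma rho_near_le k D w : 0 <= D -> w.2 <= -1 -> - (k * w.2) - w.1 <= D ->
  rho (hyp w) g_target <= rho (hyp (opt_param k)) g_target + D *+ 4.
Proof.
move=> D0 w2 hD; apply: ler_div_ge1D; rewrite ?mulrn_wge0 ?leb2_disk_fine_ge1 //.
exact: fine_leD (fin_num_leb2_disagree _) (fin_num_leb2_disagree _)
  (leb2_disagree_near_le _ _ _ D0 w2 hD).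
Qed.

Definition slope (x0 : R * R) := x0.2 / x0.1.

Lemma slope_ge0 (x0 : R * R) : 0 < x0.1 -> 0 <= x0.2 -> 0 <= slope x0.
Proof. by move=> a0 b0; rewrite /slope divr_ge0 // ltW. Qed.

Lemma Hgx0E (x0 : R * R) v : 0 < x0.1 -> Hgx0 x0 v <-> v.1 + slope x0 * v.2 <= 0.
Proof.
move=> a0; rewrite /Hgx0 /= /g_target /hyp /dot2 /= mulr1 mulr0 addr0 sgr_neqE ?gt_eqF //.
have -> : x0.1 * (x0.1 * v.1 + x0.2 * v.2) = x0.1 ^+ 2 * (v.1 + slope x0 * v.2).
  by rewrite /slope; field; rewrite gt_eqF.
by rewrite pmulr_rle0 ?exprn_gt0.
Qed.

Lemma Lgx0_ge_opt (x0 : R * R) : 0 < x0.1 -> 0 <= x0.2 ->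
  ((rho (hyp (opt_param (slope x0))) g_target)%:E <= Lgx0 x0)%E.
Proof.
move=> a0 b0; apply/ereal_infP => _ [v /(Hgx0E _ _ a0) hv <-].
by rewrite lee_fin rho_opt_le ?slope_ge0.
Qed.

Definition near_optimal (x0 : R * R) eps : set (R * R) :=
  [set w | w \in Hgx0 x0 /\ ((rho (hyp w) g_target)%:E - Lgx0 x0 <= eps%:E)%E].

Definition param_box k eta : set (R * R) :=
  (`[k - eta, k]%classic : set R) `*` (`[-1 - eta, -1]%classic : set R).

Lemma param_box_sub_near_optimal (x0 : R * R) eps eta :
  0 < x0.1 -> 0 <= x0.2 -> 0 <= eta -> 4 * (slope x0 + 1) * eta <= eps ->
  param_box (slope x0) eta `<=` near_optimal x0 eps.
Proof.
move=> a0 b0 eta0 small [w1 w2]; rewrite /param_box /= !in_itv /=.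
move=> -[/andP[w1_ge w1_le] /andP[w2_ge w2_le]].
have k0 := slope_ge0 _ a0 b0.
have kw2 : slope x0 * w2 <= - slope x0 by nra.
split; first by rewrite inE; apply/(Hgx0E _ _ a0) => /=; lra.
apply: le_trans; first exact: leeB (lexx _) (Lgx0_ge_opt _ a0 b0).
rewrite -EFinB lee_fin.
have D0 : 0 <= (slope x0 + 1) * eta by rewrite mulr_ge0 //; lra.
have hD : - (slope x0 * w2) - w1 <= (slope x0 + 1) * eta by nra.
have := rho_near_le _ _ (w1, w2) D0 w2_le hD.
by move: (rho _ _) (rho _ _) => rw ro; lra.
Qed.

End near_optimal.

Section gaussian.
Context {R : realType}.

Lemma normal_prob_itv_gt0 (m s c d : R) : s != 0 -> c < d ->
  (0 < normal_prob m s `[c, d])%E.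
Proof.
(* on [c, d] we have [|x - m| <= B], so the density is at least [k] there *)
move=> s0 cd.
set B := `|c - m| + `|d - m|.
set K := s ^+ 2 *+ 2.
have K0 : 0 < K by rewrite /K pmulrn_lgt0 // exprn_even_gt0.
set k := normal_peak s * expR (- B ^+ 2 / K).
have k0 : 0 < k by rewrite mulr_gt0 ?expR_gt0 ?normal_peak_gt0.
have mI : measurable (`[c, d]%classic : set R) by exact: measurable_itv.
apply: (@lt_le_trans _ _ (k%:E * lebesgue_measure (`[c, d]%classic : set R)))%E.
  rewrite lebesgue_measure_itv /= lte_fin cd -EFinB -EFinM lte_fin.
  by rewrite mulr_gt0 // subr_gt0.
rewrite /normal_prob -integral_cst //.
apply: ge0_le_integral => //.
- by move=> x _; rewrite /= lee_fin ltW.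
- by apply/measurable_EFinP; apply: measurable_funTS; exact: measurable_normal_pdf.
move=> x; rewrite /= in_itv /= => /andP [cx xd].
rewrite lee_fin /normal_pdf (negbTE s0) /k.
apply: ler_wpM2l; first exact: normal_peak_ge0.
rewrite /normal_fun ler_expR -/K !mulNr lerN2.
apply: ler_wpM2r; first by rewrite invr_ge0 ltW.
have h1 : x - m <= B.
  have := ler_norm (d - m); have := normr_ge0 (c - m); rewrite /B; lra.
have h2 : - (x - m) <= B.
  have := ler_norm (- (c - m)); rewrite normrN; have := normr_ge0 (d - m); rewrite /B; lra.
nra.
Qed.

Lemma normal_prob_itvE (m s c d : R) : s != 0 -> c < d ->
  exists2 p, 0 < p <= 1 & normal_prob m s `[c, d] = p%:E.
Proof.
move=> s0 cd; have := normal_prob_itv_gt0 m s c d s0 cd.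
have : (normal_prob m s `[c, d] <= 1)%E by apply: probability_le1; exact: measurable_itv.
case: (normal_prob m s _) => [p p1 p0| |] //=.
by exists p => //; apply/andP; split; [exact: p0|exact: p1].
Qed.

Lemma gauss2_param_boxE (m : R * R) s k eta : s != 0 -> 0 < eta ->
  exists2 p, 0 < p <= 1 & gauss2 m s (param_box k eta) = p%:E.
Proof.
move=> s0 eta0.
have [p1 /andP[p1_gt0 p1_le1] p1E] : exists2 p, 0 < p <= 1 &
    normal_prob m.1 s `[k - eta, k] = p%:E by apply: normal_prob_itvE => //; lra.
have [p2 /andP[p2_gt0 p2_le1] p2E] : exists2 p, 0 < p <= 1 &
    normal_prob m.2 s `[-1 - eta, -1] = p%:E by apply: normal_prob_itvE => //; lra.
exists (p1 * p2); first by rewrite mulr_gt0 //= mulr_ile1 // ltW.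
rewrite /gauss2 /param_box product_measure1E /=; try exact: measurable_itv.
by rewrite p1E p2E.
Qed.

End gaussian.

Section iid_sample.
Context {R : realType} {d : measure_display} {T : measurableType d} {P : probability T R}.
Context {N : nat} {W : 'I_N -> T -> R * R} {mu : set (R * R) -> \bar R}.
Hypothesis iidW : iid_law P W mu.

Lemma measurable_iid_preimage i (S : set (R * R)) : measurable S -> measurable (W i @^-1` S).
Proof. by move=> mS; rewrite -[X in measurable X]setTI; exact: iidW.1. Qed.

Lemma iid_law_miss_all {S : set (R * R)} {p : R} : measurable S -> mu S = p%:E ->
  P (\bigcap_(i in [set: 'I_N]) W i @^-1` ~` S) = ((1 - p) ^+ N)%:E.
Proof.
move=> mS muS; have [_ [lawW indW]] := iidW.
rewrite indW; last by move=> i; exact: measurableC.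
have miss i : P (W i @^-1` ~` S) = (1 - p)%:E.
  rewrite -preimage_setC probability_setC ?lawW ?muS //.
  exact: measurable_iid_preimage.
by rewrite (eq_bigr _ (fun i _ => miss i)) prodEFin prodr_const card_ord.
Qed.

End iid_sample.

Lemma geometric_bigO_expR_sqrt {R : realType} (p : R) : 0 < p <= 1 ->
  exists C : R, exists N0 : nat, forall N : nat, (N0 <= N)%N ->
    `|(1 - p) ^+ N| <= C * expR (- Num.sqrt (N%:R)).
Proof.
move=> /andP[p0 p1]; exists 1, (Num.trunc (p ^-2)).+1 => N hN.
rewrite mul1r ger0_norm; last by apply: exprn_ge0; lra.
apply: (@le_trans _ _ (expR (- p) ^+ N)).
  apply: lerXn2r; rewrite ?nnegrE ?expR_ge0; try lra.
  by have := expR_ge1Dx (- p); lra.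
rewrite -expRM_natl ler_expR.
have q0 : 0 <= Num.sqrt (N%:R : R) := sqrtr_ge0 _.
have qq : Num.sqrt (N%:R : R) ^+ 2 = N%:R by rewrite sqr_sqrtr // ler0n.
have pN : 1 < (p * Num.sqrt (N%:R : R)) ^+ 2.
  rewrite exprMn qq -(@ltr_pM2l _ (p ^-2)) ?invr_gt0 ?exprn_gt0 //.
  rewrite mulr1 mulrA mulVf ?mul1r ?expf_neq0 ?gt_eqF //.
  by apply: (lt_le_trans (truncnS_gt _)); rewrite ler_nat.
move: (Num.sqrt _) q0 qq pN => q q0 <- pN.
have pq : 1 <= p * q by have := mulr_ge0 (ltW p0) q0; nra.
nra.
Qed.

Lemma inf_min_dist_le0 {R : realType} (x0 : R * R) (eps : R) N (ws : 'I_N -> R * R) i :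
  near_optimal x0 eps (ws i) -> (inf_min_dist x0 eps ws <= 0)%E.
Proof.
move=> near_i; apply: ereal_inf_le; exists (min_dist x0 ws (ws i)); first by exists (ws i).
rewrite /min_dist (bigD1 i) ?near_i.1 //= ge_min; apply/orP; left.
by rewrite subrr /norm2 /= expr0n /= addr0 sqrtr0.
Qed.

Lemma polar_first_quadrant {R : realType} {x0 : R * R} {theta : R} : x0 != 0 ->
  x0 = (norm2 x0 * cos theta, norm2 x0 * sin theta) -> 0 < theta < pi / 2 ->
  0 < x0.1 /\ 0 <= x0.2.
Proof.
move=> x0n0 x0E /andP[th0 th1]; have pi0 := pi_gt0 R.
have c0 : 0 < cos theta by apply: cos_gt0_pihalf; apply/andP; split; lra.
have s0 : 0 <= sin theta by apply: sin_ge0_pi; apply/andP; split; lra.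
have r0 : 0 < norm2 x0.
  rewrite lt_neqAle sqrtr_ge0 andbT; apply: contraNneq x0n0 => r0.
  by rewrite x0E -r0 !mul0r.
by rewrite x0E /=; split; [exact: mulr_gt0|exact: mulr_ge0 (ltW r0) s0].
Qed.

Theorem proposition3 (R : realType) (x0 : R * R) (theta0 eps sigma B : R) :
  x0 != 0 -> norm2 x0 <= 1 ->
  x0 = (norm2 x0 * cos theta0, norm2 x0 * sin theta0) ->
  0 < theta0 < pi / 2 ->
  0 < eps < 1 -> theta0 + pi * eps < pi / 2 ->
  0 < sigma -> 0 < B ->
  exists (alpha beta : nat -> R),
    (exists C : R, exists N0 : nat, forall N : nat, (N0 <= N)%N ->
        `|alpha N| <= C / Num.sqrt (N%:R)) /\
    (exists C : R, exists N0 : nat, forall N : nat, (N0 <= N)%N ->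
        `|beta N| <= C * expR (- Num.sqrt (N%:R))) /\
    forall (N : nat) (d : measure_display) (T : measurableType d)
           (P : probability T R) (W : 'I_N -> T -> R * R),
      iid_law P W (gauss2 (1, 0) sigma) ->
      exists E : set T, measurable E /\
        E `<=` [set t | (inf_min_dist x0 eps (fun i => W i t)
                          <= (alpha N / B)%:E)%E] /\
        ((1 - beta N)%:E <= P E)%E.
Proof.
move=> x0n0 _ x0E th /andP[eps0 _] _ sigma0 _.
have [a0 b0] := polar_first_quadrant x0n0 x0E th.
have c0 : 0 < 4 * (slope x0 + 1) by have := slope_ge0 _ a0 b0; lra.
pose eta := eps / (4 * (slope x0 + 1)).
have eta0 : 0 < eta by rewrite divr_gt0.
have box_near : param_box (slope x0) eta `<=` near_optimal x0 eps.
  apply: param_box_sub_near_optimal _ _ _ a0 b0 (ltW eta0) _.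
  by rewrite /eta mulrC divfK ?gt_eqF.
have [p p01 boxE] := gauss2_param_boxE (1, 0) sigma (slope x0) eta (lt0r_neq0 sigma0) eta0.
exists (fun _ => 0), (fun N => (1 - p) ^+ N); split.
  by exists 0, 0%N => N _; rewrite normr0 mul0r.
split; first exact: geometric_bigO_expR_sqrt.
move=> N d T P W iidW.
have mbox : measurable (param_box (slope x0) eta) by apply: measurableX; exact: measurable_itv.
have mmiss : measurable (\bigcap_(i in [set: 'I_N]) W i @^-1` ~` param_box (slope x0) eta).
  apply: fin_bigcap_measurable => [|i _]; first exact: finite_finset.
  exact: measurable_iid_preimage iidW i _ (measurableC mbox).
exists (~` \bigcap_(i in [set: 'I_N]) W i @^-1` ~` param_box (slope x0) eta).
split; first exact: measurableC.
split; last by rewrite probability_setC // (iid_law_miss_all iidW mbox boxE).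
move=> t /= hit; rewrite mul0r.
have [i box_i] : exists i, param_box (slope x0) eta (W i t).
  by apply: contrapT => nobox; apply: hit => i _ box_i; apply: nobox; exists i.
exact: inf_min_dist_le0 (box_near _ box_i).
Qed.
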